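(* Let $k,r\ge1$ be integers and let $m=\lceil r/2\rceil$. Then $$\psi_{(3,2^k,1^r)}=\begin{cases}\big[\psi_{(2^{m+k+1})}-h_2p_1^{r+1}\psi_{(2^k)}\big]+p_1^r(2h_3+e_3)\psi_{(2^k)}, & r\text{ odd},\\[2pt] p_1\big[\psi_{(2^{m+k+1})}-h_2p_1^{r}\psi_{(2^k)}\big]+p_1^r(2h_3+e_3)\psi_{(2^k)}, & r\text{ even}.\end{cases}$$
   Context: $p_i$, $h_i$, $e_i$ denote power sum, complete homogeneous and elementary symmetric functions, and $p_\lambda=\prod_i p_{\lambda_i}$. Reverse lexicographic order on partitions of $n$: for distinct $\lambda,\mu\vdash n$, $\lambda>\mu$ iff $\lambda_j>\mu_j$ at the first index $j$ where they differ; $(1^n)$ is minimal. For $\mu\vdash n$, $\psi_\mu=\sum_{\lambda\vdash n,\ (1^n)\le\lambda\le\mu}p_\lambda$. In particular $\psi_{(2^j)}=\sum_{i=0}^j p_2^ip_1^{2j-2i}$. *)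

(* symmetric functions realised in {mpoly R[n]} for every n. *)
From HB Require Import structures.
From mathcomp Require Import all_boot all_order all_algebra.
From mathcomp Require Import mpoly.
Set Implicit Arguments. Unset Strict Implicit. Unset Printing Implicit Defensive.
Import Order.TTheory GRing.Theory.
Local Open Scope ring_scope.

Section SymFun.
Variables (n : nat) (R : comNzRingType).

Definition psum (k : nat) : {mpoly R[n]} := \sum_(i < n) 'X_i ^+ k.

Definition hsym (d : nat) : {mpoly R[n]} :=
  \sum_(m : 'X_{1..n < d.+1} | mdeg (val m) == d) 'X_[val m].

Definition esf (d : nat) : {mpoly R[n]} := mesym n R d.

Definition plam (la : seq nat) : {mpoly R[n]} := \prod_(i <- la) psum i.
End SymFun.

(* parts_aux f N K : all partitions (weakly decreasing sequences of positive
   integers) of N whose parts are <= K; f is fuel (f >= N suffices). *)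
Fixpoint parts_aux (f N K : nat) : seq (seq nat) :=
  if N is 0 then [:: [::]] else
  match f with
  | 0 => [::]
  | f'.+1 => flatten [seq [seq a :: s | s <- parts_aux f' (N - a) a]
                     | a <- iota 1 (minn K N)]
  end.

Definition partitions (N : nat) : seq (seq nat) := parts_aux N N N.

(* lexicographic comparison: la <= mu iff la = mu or la_j < mu_j at the first
   index j where they differ ("reverse lexicographic order" of the paper) *)
Fixpoint revlex_le (la mu : seq nat) : bool :=
  match la, mu with
  | [::], _ => true
  | _ :: _, [::] => false
  | a :: la', b :: mu' => (a < b)%N || ((a == b) && revlex_le la' mu')
  end.

Definition psi (n : nat) (R : comNzRingType) (mu : seq nat) : {mpoly R[n]} :=
  \sum_(la <- partitions (sumn mu) | revlex_le la mu) plam n R la.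

Arguments psum n R k : clear implicits.
Arguments hsym n R d : clear implicits.
Arguments esf n R d : clear implicits.
Arguments plam n R la : clear implicits.
Arguments psi n R mu : clear implicits.

From HB Require Import structures.
From mathcomp Require Import all_boot all_order all_algebra.
From mathcomp Require Import mpoly.
From mathcomp Require Import zify ring.
Import GRing.Theory.
Local Open Scope ring_scope.

(* Split the partitions la <= (3, 2^k, 1^r) of N = 2k + r + 3 by their first
   part: la_1 = 1 contributes p_1^N, la_1 = 2 leaves an arbitrary partition of
   N - 2 into parts <= 2, and la_1 = 3 leaves a partition <= (2^k, 1^r).
   Summing p_la over each family with the recurrence
   psi_(2^(j+1)) = p_1^(2j+2) + p_2 psi_(2^j) gives
     psi_(3,2^k,1^r) = p_1^N + p_2 p_1^e psi_(2^((N-2)/2)) + p_3 p_1^r psi_(2^k),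
   e the parity of N, and the claim follows from 2h_3 + e_3 = h_2 p_1 + p_3,
   checked on the coefficients of the monomials of degree 3. *)

Lemma parts_aux0 f K : parts_aux f 0 K = [:: [::]].
Proof. by case: f. Qed.

Lemma parts_aux_ones f N : (N <= f)%N -> parts_aux f N 1 = [:: nseq N 1%N].
Proof.
elim: f N => [|f IH] [|N] //= leNf.
by rewrite (minn_idPl (ltn0Sn N)) /= subSS subn0 IH.
Qed.

Lemma big_parts_aux (V : nmodType) (P : pred (seq nat)) (F : seq nat -> V) f N K :
  \sum_(s <- parts_aux f.+1 N.+1 K | P s) F s =
  \sum_(a <- iota 1 (minn K N.+1))
     \sum_(t <- parts_aux f (N.+1 - a) a | P (a :: t)) F (a :: t).
Proof.
rewrite /=; elim: (iota _ _) => [|a s IH]; first by rewrite !big_nil.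
by rewrite /= big_cat big_map IH big_cons.
Qed.

Lemma revlex_le_refl s : revlex_le s s.
Proof. by elim: s => //= a s ->; rewrite eqxx orbT. Qed.

Lemma revlex_le_cons2 a t u : revlex_le (a :: t) (a :: u) = revlex_le t u.
Proof. by rewrite /= ltnn eqxx. Qed.

Lemma revlex_le_cons_lt a b t u : (a < b)%N -> revlex_le (a :: t) (b :: u).
Proof. by move=> ltab; rewrite /= ltab. Qed.

Lemma revlex_le_cons_gt a b t u : (b < a)%N -> revlex_le (a :: t) (b :: u) = false.
Proof. by move=> ltba; rewrite /= ltnNge (ltnW ltba) gtn_eqF. Qed.

Lemma big_parts_aux_revlex (V : nmodType) (F : seq nat -> V) f N K b u :
  (0 < b <= minn K N.+1)%N ->
  \sum_(s <- parts_aux f.+1 N.+1 K | revlex_le s (b :: u)) F s =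
  \sum_(a <- iota 1 b.-1) \sum_(t <- parts_aux f (N.+1 - a) a) F (a :: t)
  + \sum_(t <- parts_aux f (N.+1 - b) b | revlex_le t u) F (b :: t).
Proof.
case: b => // b /andP[_ lebK]; rewrite big_parts_aux.
have -> : iota 1 (minn K N.+1) = iota 1 b ++ b.+1 :: iota b.+2 (minn K N.+1 - b.+1).
  by rewrite -{1}(subnKC (ltnW lebK)) iotaD -subnSK.
have heads_gt_b : \sum_(a <- iota b.+2 (minn K N.+1 - b.+1))
    \sum_(t <- parts_aux f (N.+1 - a) a | revlex_le (a :: t) (b.+1 :: u)) F (a :: t) = 0.
  rewrite big_seq big1 // => a; rewrite mem_iota => /andP[ltba _].
  by rewrite big_pred0 // => t; rewrite revlex_le_cons_gt.
rewrite big_cat big_cons heads_gt_b Monoid.mulm1; congr (_ + _).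
  rewrite !big_seq; apply: eq_bigr => a; rewrite mem_iota => /andP[_ ltab].
  by apply: eq_bigl => t; rewrite revlex_le_cons_lt.
by apply: eq_bigl => t; rewrite revlex_le_cons2.
Qed.

Section PowerSumExpansions.
Variables (n : nat) (R : comNzRingType).
Local Notation p := (psum n R).
Local Notation plam := (plam n R).

Lemma plam_cons a s : plam (a :: s) = p a * plam s.
Proof. by rewrite /plam big_cons. Qed.

Lemma plam_nil : plam [::] = 1.
Proof. by rewrite /plam big_nil. Qed.

Lemma plam_nseq1 N : plam (nseq N 1%N) = p 1 ^+ N.
Proof. by elim: N => [|N IH]; rewrite ?plam_nil // plam_cons IH exprS. Qed.

Definition psi_twos j := \sum_(i < j.+1) p 2 ^+ i * p 1 ^+ (j - i).*2.

Lemma psi_twos0 : psi_twos 0 = 1.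
Proof. by rewrite /psi_twos big_ord1 subnn mulr1. Qed.

Lemma psi_twosS j : psi_twos j.+1 = p 1 ^+ j.+1.*2 + p 2 * psi_twos j.
Proof.
rewrite /psi_twos big_ord_recl subn0 mul1r mulr_sumr; congr (_ + _).
by apply: eq_bigr => i _; rewrite subSS exprS mulrA.
Qed.

Lemma sum_plam_parts_le2 f N : (N <= f)%N ->
  \sum_(s <- parts_aux f N 2) plam s = p 1 ^+ odd N * psi_twos N./2.
Proof.
elim: f N => [|f IH] [|[|N]] // leNf;
  rewrite ?parts_aux0 ?big_seq1 ?plam_nil ?psi_twos0 ?mulr1 //.
  by rewrite (big_parts_aux _ xpredT) big_seq1 subnn parts_aux0 big_seq1 plam_cons plam_nil mulr1.
rewrite (big_parts_aux _ xpredT) (minn_idPl _) // big_cons big_seq1.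
rewrite parts_aux_ones ?big_seq1 ?plam_cons ?plam_nseq1; last by lia.
rewrite (_ : N.+2 - 2 = N)%N ?subSS ?subn0 //.
under eq_bigr do rewrite plam_cons.
rewrite -mulr_sumr IH; last by lia.
rewrite /= negbK psi_twosS mulrDr -exprD [p 2 * _]mulrCA; congr (_ + _).
by rewrite (_ : odd N + N./2.+1.*2 = N.+2)%N ?exprS // doubleS -[in RHS](odd_double_half N); lia.
Qed.

Lemma sum_plam_parts_revlex_twos_ones f K j r :
  (minn 2 (j.*2 + r) <= K)%N -> (j.*2 + r <= f)%N ->
  \sum_(s <- parts_aux f (j.*2 + r) K | revlex_le s (nseq j 2%N ++ nseq r 1%N)) plam s
  = p 1 ^+ r * psi_twos j.
Proof.
elim: j f K => [|j IH] [|f] K leK lef //.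
- case: r lef leK => // _ _.
  by rewrite parts_aux0 big_cons big_nil /= plam_nil psi_twos0 mulr1 addr0.
- rewrite psi_twos0 mulr1; case: r lef leK => [|r] lef leK.
    by rewrite parts_aux0 big_cons big_nil /= plam_nil addr0.
  rewrite big_parts_aux_revlex /=; last by lia.
  rewrite big_nil add0r subSS subn0 parts_aux_ones; last by lia.
  by rewrite big_cons big_nil revlex_le_refl addr0 plam_cons plam_nseq1 exprS.
change (nseq j.+1 2%N ++ _) with (2%N :: (nseq j 2%N ++ nseq r 1%N)).
rewrite doubleS !addSn big_parts_aux_revlex; last by lia.
rewrite [iota _ _]/= big_seq1 !subSS !subn0 parts_aux_ones; last by lia.
rewrite big_seq1 plam_cons plam_nseq1.
under eq_bigr do rewrite plam_cons.
rewrite -mulr_sumr IH; [|lia|lia].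
rewrite psi_twosS mulrDr -exprD [p 2 * _]mulrCA.
by rewrite (_ : r + j.+1.*2 = (j.*2 + r).+2)%N ?exprS //; lia.
Qed.

Lemma psi_nseq2 j : psi n R (nseq j 2%N) = psi_twos j.
Proof.
rewrite /psi /partitions sumn_nseq.
have := sum_plam_parts_revlex_twos_ones (j.*2 + 0) (j.*2 + 0) j 0.
rewrite cats0 expr0 mul1r addn0 -mul2n => <- //.
by rewrite geq_minr.
Qed.

Lemma psi_3_twos_ones k r :
  psi n R (3%N :: nseq k 2%N ++ nseq r 1%N) =
  p 1 ^+ (k.*2 + r).+3
  + p 2 * (p 1 ^+ odd (k.*2 + r).+1 * psi_twos (k.*2 + r).+1./2)
  + p 3 * (p 1 ^+ r * psi_twos k).
Proof.
rewrite /psi /partitions.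
have -> : sumn (3%N :: nseq k 2%N ++ nseq r 1%N) = (k.*2 + r).+3.
  by rewrite /= sumn_cat !sumn_nseq; lia.
rewrite big_parts_aux_revlex ?minnn //.
rewrite [iota _ _]/= big_cons big_seq1 !subSS !subn0 parts_aux_ones // big_seq1.
rewrite plam_cons plam_nseq1 -exprS.
under eq_bigr do rewrite plam_cons.
under [X in _ + X]eq_bigr do rewrite plam_cons.
by rewrite -!mulr_sumr sum_plam_parts_le2 // sum_plam_parts_revlex_twos_ones //; lia.
Qed.
End PowerSumExpansions.

Lemma mdeg3_support_count n (m : 'X_{1..n}) : mdeg m = 3%N ->
  (\sum_(i < n) (0 < m i) + \sum_(i < n) (2 < m i) = 2 + [forall i, m i <= 1])%N.
Proof.
move=> deg3; have le3 i : (m i <= 3)%N by rewrite -deg3 mdegE (bigD1 i) //= leq_addr.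
set s := (\sum_i _)%N; set u := (\sum_i _)%N; set t := (\sum_(i < n) (1 < m i))%N.
have stu : (s + t + u = 3)%N.
  rewrite -deg3 mdegE -!big_split; apply: eq_bigr => i _.
  by have := le3 i; case: (m i) => [|[|[|[|]]]].
have le_ts : (t <= s)%N by apply: leq_sum => i _; case: (m i) => [|[|]].
have le_ut : (u <= t)%N by apply: leq_sum => i _; case: (m i) => [|[|[|]]].
have -> : [forall i, m i <= 1]%N = (t == 0%N).
  rewrite sum_nat_eq0; apply: eq_forallb => i.
  by case: (m i) => [|[|]].
case: eqP; lia.
Qed.

Lemma lepm_mnm1 n (m : 'X_{1..n}) i : (U_(i) <= m)%MM = (0 < m i)%N.
Proof.
apply/mnm_lepP/idP => [/(_ i)|mi_gt0 j]; first by rewrite mnm1E eqxx.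
by rewrite mnm1E; case: eqP => [<-|].
Qed.

Lemma mnm1Mn_eq n (m : 'X_{1..n}) i k : mdeg m = k -> (U_(i) *+ k == m)%MM = (k <= m i)%N.
Proof.
move=> deg_k; apply/eqP/idP => [<-|le_k]; first by rewrite mulmnE mnm1E eqxx mul1n.
have le_Um : (U_(i) *+ k <= m)%MM.
  by apply/mnm_lepP => j; rewrite mulmnE mnm1E; case: eqP => [<-|]; rewrite ?mul1n.
apply/eqP; rewrite -[m in _ == m](submK le_Um) -{1}[(U_(i) *+ k)%MM]add0m eqm_add2r eq_sym.
by rewrite -mdeg_eq0; have := congr1 mdeg (submK le_Um); rewrite mdegD mdegMn mdeg1 deg_k; lia.
Qed.

Section CompleteElementaryPowerSum.
Variables (n : nat) (R : comNzRingType).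
Local Notation p := (psum n R).

Lemma mcoeff_hsym d m : (hsym n R d)@_m = (mdeg m == d)%:R.
Proof.
rewrite /hsym raddf_sum /=.
under eq_bigr do rewrite mcoeffX.
case: (eqVneq (mdeg m) d) => [<-|neq_d].
  rewrite (bigD1 (BMultinom (ltnSn (mdeg m)))) //= eqxx big1 ?addr0 // => b /andP[_ ne_b].
  by case: eqP => // eq_b; case/eqP: ne_b; apply: val_inj.
rewrite big1 // => b /eqP deg_b; case: eqP => // eq_b.
by case/eqP: neq_d; rewrite -eq_b.
Qed.

Lemma mcoeffMXU (q : {mpoly R[n]}) i m :
  (q * 'X_i)@_m = if (0 < m i)%N then q@_(m - U_(i)) else 0.
Proof.
case: ifP => [mi_gt0|mi_eq0].
  by rewrite -{1}(submK (_ : U_(i) <= m)%MM) ?lepm_mnm1 // addmC mcoeffMX.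
rewrite mcoeffM big1 // => k /eqP m_eq; rewrite mcoeffX.
case: eqP => [k2_eq|]; last by rewrite mulr0.
have := congr1 (fun x : 'X_{1..n} => x i) m_eq.
by rewrite /= mnmDE -k2_eq mnm1E eqxx addn1 => mi; rewrite mi in mi_eq0.
Qed.

Lemma mcoeff_hsym_psum1 d m :
  (hsym n R d * p 1)@_m = ((mdeg m == d.+1) * \sum_(i < n) (0 < m i))%:R.
Proof.
rewrite /psum mulr_sumr raddf_sum big_distrr natr_sum /=; apply: eq_bigr => i _.
rewrite expr1 mcoeffMXU; case: ifP => [mi_gt0|]; last by rewrite muln0.
rewrite -lepm_mnm1 in mi_gt0.
by rewrite mcoeff_hsym -{2}(submK mi_gt0) mdegD mdeg1 addn1 eqSS muln1.
Qed.

Lemma mcoeff_psum k m : (p k)@_m = (\sum_(i < n) (U_(i) *+ k == m)%MM)%:R.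
Proof. by rewrite /psum raddf_sum natr_sum; apply: eq_bigr => i _ /=; rewrite mcoeffXn. Qed.

Lemma hsym3_esf3 : hsym n R 3 *+ 2 + esf n R 3 = hsym n R 2 * p 1 + p 3.
Proof.
apply/mpolyP => m.
rewrite mcoeffD mcoeffMn mcoeff_hsym mcoeff_mesym mcoeffD mcoeff_hsym_psum1 mcoeff_psum.
rewrite -mulrnA -!natrD /mechar; congr (_%:R).
case: (eqVneq (mdeg m) 3%N) => [deg3|ndeg3] /=.
  under [X in (_ = _ + X)%N]eq_bigr do rewrite mnm1Mn_eq //.
  by rewrite !mul1n mdeg3_support_count // addnC.
rewrite !mul0n big1 // => i _; case: eqP => // eq_m.
by move: ndeg3; rewrite -eq_m mdegMn mdeg1 mul1n eqxx.
Qed.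
End CompleteElementaryPowerSum.

Theorem proposition3p4 (R : comNzRingType) (n k r : nat) :
  (1 <= k)%N -> (1 <= r)%N ->
  let m := (r.+1)./2 in
  let P1 := psum n R 1 in
  let h2 := hsym n R 2 in
  let g := P1 ^+ r * (hsym n R 3 *+ 2 + esf n R 3) * psi n R (nseq k 2%N) in
  psi n R ([:: 3%N] ++ nseq k 2%N ++ nseq r 1%N) =
  (if odd r then
     (psi n R (nseq (m + k + 1) 2%N) - h2 * P1 ^+ r.+1 * psi n R (nseq k 2%N)) + g
   else
     P1 * (psi n R (nseq (m + k + 1) 2%N) - h2 * P1 ^+ r * psi n R (nseq k 2%N)) + g).
Proof.
move=> _ _ m P1 h2 g; rewrite /g /h2 /P1 /m psi_3_twos_ones !psi_nseq2 hsym3_esf3.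
have [h [->|->]] : exists h, r = h.*2.+1 \/ r = h.*2.
- by exists r./2; have := odd_double_half r; case: (odd r) => ?; [left|right]; lia.
- have -> : (k.*2 + h.*2.+1).+1 = (k + h).+1.*2 by rewrite doubleS doubleD addnS.
  have -> : (h.*2.+2)./2 = h.+1 by rewrite -doubleS doubleK.
  rewrite oddS !odd_double doubleK (_ : h.+1 + k + 1 = (k + h).+2)%N; last by lia.
  by rewrite /= !psi_twosS !doubleS !exprS expr0; ring.
- rewrite -doubleD oddS !odd_double -!uphalfE !uphalf_double.
  rewrite (_ : h + k + 1 = (k + h).+1)%N; last by lia.
  by rewrite /= !psi_twosS !doubleS !exprS expr0; ring.
Qed.
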